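(* Fix $a_1,a_2,b_1,b_2>0$, $p_1,p_2\in(0,1)$, $q_1,q_2>1$, integers $n_1,n_2\ge1$ and exponents $\eta_{i,j}>0$ ($i=1,2$, $j\in\{1,\dots,n_i\}$), and suppose $\eta_{1,i}\eta_{2,j}\in[p_2,q_2]$ for all $i\in\{1,\dots,n_1\}$, $j\in\{1,\dots,n_2\}$ and $\frac{\max_j\eta_{2,j}}{\min_k\eta_{2,k}}\le\frac{q_2}{p_2}$. For $i=1,2$ let $\alpha_i(s)=a_is^{p_i}+b_is^{q_i}$. Then there exists $C>0$ such that for all coefficients $c_{i,j}>0$, setting $\sigma_i(s)=\sum_{j=1}^{n_i}c_{i,j}s^{\eta_{i,j}}$, $\gamma_i:=\alpha_i^{-1}\circ\sigma_i$ and $c_i:=\max_jc_{i,j}$: if $c_2\max_kc_1^{\eta_{2,k}}<C$, then there exist $\hat\gamma_1\in\mathcal{K}^{\mathcal{P}}$ and $\hat\gamma_2\in\mathcal{K}^{\mathcal{P}^{-1}}$ such that $\hat\gamma_i(s)>\gamma_i(s)$ for $i=1,2$ and $\hat\gamma_1\circ\hat\gamma_2(s)<s$ for all $s>0$.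
   Context: $\mathcal{K}_\infty$: continuous strictly increasing unbounded $\alpha:\mathbb{R}_{\ge0}\to\mathbb{R}_{\ge0}$ with $\alpha(0)=0$. $\mathcal{K}^{\mathcal{P}}$: the $\alpha\in\mathcal{K}_\infty$ of the form $\sum_{i=1}^nc_is^{p_i}$ with real $c_i\ne0$, $p_i>0$, and $\alpha'(s)>0$ for $s>0$. $\mathcal{K}^{\mathcal{P}^{-1}}$: the $\alpha\in\mathcal{K}_\infty$ with $\alpha^{-1}\in\mathcal{K}^{\mathcal{P}}$. *)

From HB Require Import structures.
From mathcomp Require Import all_boot all_order all_algebra.
From mathcomp Require Import all_classical all_reals all_analysis.
Set Implicit Arguments. Unset Strict Implicit. Unset Printing Implicit Defensive.
Import Order.TTheory GRing.Theory Num.Theory.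
Import numFieldNormedType.Exports.
Local Open Scope classical_set_scope.
Local Open Scope ring_scope.

Section Defs.
Variable R : realType.

Definition Kinf (alpha : R -> R) : Prop :=
  [/\ alpha 0 = 0,
      {within [set x : R | 0 <= x], continuous alpha},
      (forall x y, 0 <= x -> x < y -> alpha x < alpha y)
    & (forall M : R, exists s, 0 <= s /\ M < alpha s)].

Definition KP (alpha : R -> R) : Prop :=
  Kinf alpha /\
  (exists (n : nat) (c p : 'I_n -> R),
      (forall i, c i != 0 /\ 0 < p i) /\
      (forall s, 0 <= s -> alpha s = \sum_(i < n) c i * s `^ p i)) /\
  (forall s, 0 < s -> derivable alpha s 1 /\ 0 < derive1 alpha s).

Definition KPinv (alpha : R -> R) : Prop :=
  Kinf alpha /\
  exists beta : R -> R, KP beta /\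
    (forall s, 0 <= s -> beta (alpha s) = s) /\
    (forall s, 0 <= s -> alpha (beta s) = s).

Definition Kinverse (alpha : R -> R) (y : R) : R :=
  xget 0 [set t : R | 0 <= t /\ alpha t = y].

Definition alpha_pq (a b p q : R) (s : R) : R := a * s `^ p + b * s `^ q.

Definition sigma_sum (n : nat) (c eta : 'I_n -> R) (s : R) : R :=
  \sum_(j < n) c j * s `^ eta j.

(* maximum of finitely many positive reals (0 for the empty family) *)
Definition fmax (n : nat) (f : 'I_n -> R) : R := \big[Num.max/0]_(i < n) f i.
Definition fmin (n : nat) (f : 'I_n -> R) : R := \big[Num.min/fmax f]_(i < n) f i.

End Defs.

From HB Require Import structures.
From mathcomp Require Import all_boot all_order all_algebra.
From mathcomp Require Import all_classical all_reals all_analysis.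
From mathcomp Require Import ring lra.
Set Implicit Arguments. Unset Strict Implicit. Unset Printing Implicit Defensive.
Import Order.TTheory GRing.Theory Num.Theory.
Import numFieldNormedType.Exports.
Import Num.Def.
Local Open Scope classical_set_scope.
Local Open Scope ring_scope.

(* With m_i = min(a_i, b_i) we have alpha_1(t) >= m_1 t, so gamma_1 <= sigma_1 / m_1
   is dominated by the power sum (2 / m_1) sigma_1, which is in K^P.  Take for the
   second gain the inverse of beta(s) = A sum_j s^(eta_1j) with A = 4 max_j c_1j / m_1:
   A exceeds every coefficient of (2 / m_1) sigma_1, hence the composition is below
   beta(beta^-1(s)) = s.  It remains that beta(t) < s for t = gamma_2(s), i.e.
   B M_1 t^(eta_1j) < s for all j, where B = 4 n_1 / m_1 and M_1 = max_j c_1j.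
   Otherwise, raising to the powers eta_2k and using p_2 <= eta_1j eta_2k <= q_2,
     alpha_2(t) = sigma_2(s) <= max c_2 * max_k M_1^(eta_2k) * (t^p_2 + t^q_2)
                                * sum_k B^(eta_2k),
   while alpha_2(t) >= m_2 (t^p_2 + t^q_2); this is excluded by the smallness
   condition with C = m_2 / sum_k B^(eta_2k). *)

(* [Kinverse f y] is [0] when [y] has no nonnegative preimage; the bounds on
   [Kinverse (alpha_pq ...)] below hold in that case too, so surjectivity of
   [alpha_pq] is never needed. *)
Lemma Kinverse_cases (R : realType) (f : R -> R) y :
  (0 <= Kinverse f y /\ f (Kinverse f y) = y) \/ Kinverse f y = 0.
Proof.
have [ex|nex] := pselect (exists t, 0 <= t /\ f t = y).
  by left; exact: (xgetPex 0 ex).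
by right; apply: xgetPN => t ft; apply: nex; exists t.
Qed.

Section Kinverse_Kinf.
Variables (R : realType) (f : R -> R).
Hypothesis f_Kinf : Kinf f.

Let f0 : f 0 = 0. Proof. by case: f_Kinf. Qed.

Let f_lt {x y} : 0 <= x -> x < y -> f x < f y.
Proof. by case: f_Kinf => _ _ + _; apply. Qed.

Lemma Kinf_ge0 {s} : 0 <= s -> 0 <= f s.
Proof.
rewrite le_eqVlt => /predU1P[<-|s_gt0]; first by rewrite f0.
by rewrite -f0 ltW // f_lt.
Qed.

Lemma Kinf_surj y : 0 <= y -> exists t, 0 <= t /\ f t = y.
Proof.
move=> y_ge0; case: f_Kinf => _ f_cont _ /(_ y)[T [T_ge0 yT]].
have f_cont0T : {within `[0, T], continuous f}.
  by apply: continuous_subspaceW f_cont => z /=; rewrite in_itv /= => /andP[].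
have [|t t_in ft] := @IVT R f 0 T y T_ge0 f_cont0T.
  rewrite f0 (min_idPl (Kinf_ge0 T_ge0)) (max_idPr (Kinf_ge0 T_ge0)) y_ge0 /=.
  exact: ltW.
by exists t; move: t_in; rewrite in_itv /= => /andP[].
Qed.

Lemma Kinverse_ge0 {y} : 0 <= y -> 0 <= Kinverse f y.
Proof. by move/Kinf_surj/(xgetPex 0) => []. Qed.

Lemma f_Kinverse {y} : 0 <= y -> f (Kinverse f y) = y.
Proof. by move/Kinf_surj/(xgetPex 0) => []. Qed.

Lemma Kinverse_f {s} : 0 <= s -> Kinverse f (f s) = s.
Proof.
move=> s_ge0; have fs_ge0 := Kinf_ge0 s_ge0.
have := f_Kinverse fs_ge0; have := Kinverse_ge0 fs_ge0.
set t := Kinverse f (f s) => t_ge0 fts.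
by case: (ltgtP t s) => // [/(f_lt t_ge0)|/(f_lt s_ge0)]; rewrite fts ltxx.
Qed.

Lemma Kinverse_lt {x y} : 0 <= x -> x < y -> Kinverse f x < Kinverse f y.
Proof.
move=> x_ge0 xy; have y_ge0 := le_trans x_ge0 (ltW xy).
rewrite ltNge; apply/negP; rewrite le_eqVlt => /predU1P[eq_xy|lt_yx].
  by move: xy; rewrite -(f_Kinverse x_ge0) -(f_Kinverse y_ge0) eq_xy ltxx.
have := f_lt (Kinverse_ge0 y_ge0) lt_yx.
by rewrite !f_Kinverse // ltNge (ltW xy).
Qed.

Lemma Kinverse_gt {t y} : 0 <= t -> f t < y -> t < Kinverse f y.
Proof. by move=> t_ge0 /(Kinverse_lt (Kinf_ge0 t_ge0)); rewrite Kinverse_f. Qed.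

Lemma Kinverse_continuous : {within [set x | 0 <= x], continuous (Kinverse f)}.
Proof.
apply/subspace_continuousP => x /= x_ge0; apply/cvgrPdist_lt => e e_gt0.
rewrite near_withinE.
set u := Kinverse f x; have u_ge0 : 0 <= u := Kinverse_ge0 x_ge0.
have upper : \forall y \near x, 0 <= y -> Kinverse f y < u + e.
  have /lt_nbhsl : x < f (u + e).
    by rewrite -{1}(f_Kinverse x_ge0) f_lt // ltrDl.
  apply: filterS => y y_lt y_ge0.
  by rewrite -[u + e]Kinverse_f ?Kinverse_lt // addr_ge0 // ltW.
have lower : \forall y \near x, 0 <= y -> u - e < Kinverse f y.
  have [e_le_u|u_lt_e] := leP e u; last first.
    near=> y => y_ge0; apply: lt_le_trans (Kinverse_ge0 y_ge0).
    by rewrite subr_lt0.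
  have /lt_nbhsr : f (u - e) < x.
    by rewrite -(f_Kinverse x_ge0) f_lt ?subr_ge0 // ltrBlDr ltrDl.
  apply: filterS => y y_gt y_ge0.
  by rewrite -[u - e]Kinverse_f ?Kinverse_lt ?subr_ge0 // Kinf_ge0 ?subr_ge0.
near=> y => y_ge0; rewrite ltr_distlC.
by rewrite (near lower y) // (near upper y).
Unshelve. all: by end_near.
Qed.

Lemma Kinverse_Kinf : Kinf (Kinverse f).
Proof.
split.
- by rewrite -{1}f0 Kinverse_f.
- exact: Kinverse_continuous.
- by move=> x y; exact: Kinverse_lt.
- move=> M; have M1_ge0 : 0 <= `|M| + 1 by rewrite addr_ge0.
  exists (f (`|M| + 1)); split; first exact: Kinf_ge0.
  by rewrite Kinverse_f // (le_lt_trans (ler_norm M)) // ltrDl.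
Qed.

End Kinverse_Kinf.

Lemma KPinv_Kinverse (R : realType) (f : R -> R) : KP f -> KPinv (Kinverse f).
Proof.
move=> f_KP; have f_Kinf := f_KP.1.
split; first exact: Kinverse_Kinf.
by exists f; split => //; split=> s s_ge0; [exact: f_Kinverse | exact: Kinverse_f].
Qed.

Lemma le_fmax (R : realType) n (f : 'I_n -> R) j : f j <= fmax f.
Proof. exact: le_bigmax. Qed.

Lemma fmax_gt0 (R : realType) n (f : 'I_n -> R) :
  (0 < n)%N -> (forall j, 0 < f j) -> 0 < fmax f.
Proof.
by move=> n_gt0 f_gt0; exact: lt_le_trans (f_gt0 (Ordinal n_gt0)) (le_fmax _ _).
Qed.

Lemma powR_le_add (R : realType) (t p q r : R) : 0 <= t -> 0 < p -> p <= r <= q ->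
  t `^ r <= t `^ p + t `^ q.
Proof.
move=> t_ge0 p_gt0 /andP[pr rq].
have tp_ge0 := powR_ge0 t p; have tq_ge0 := powR_ge0 t q.
have [->|t_neq0] := eqVneq t 0.
  by rewrite powR0 ?addr_ge0 // gt_eqF // (lt_le_trans p_gt0).
have t_gt0 : 0 < t by rewrite lt_neqAle eq_sym t_neq0.
have [t_le1|t_gt1] := leP t 1.
  suff : t `^ r <= t `^ p by lra.
  by apply: ger_powR => //; rewrite t_gt0.
suff : t `^ r <= t `^ q by lra.
by apply: ler_powR => //; exact: ltW.
Qed.

Lemma alpha_pq_ge (R : realType) (a b p q t : R) : 0 < a -> 0 < b ->
  minr a b * (t `^ p + t `^ q) <= alpha_pq a b p q t.
Proof.
move=> a_gt0 b_gt0; rewrite /alpha_pq mulrDr.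
by apply: lerD; apply: ler_wpM2r; rewrite ?powR_ge0 // ge_min lexx ?orbT.
Qed.

Lemma Kinverse_alpha_pq_le (R : realType) (a b p q y : R) :
  0 < a -> 0 < b -> 0 < p <= 1 -> 1 <= q -> 0 <= y ->
  Kinverse (alpha_pq a b p q) y <= y / minr a b.
Proof.
move=> a_gt0 b_gt0 /andP[p_gt0 p_le1] q_ge1 y_ge0.
have m_gt0 : 0 < minr a b by rewrite lt_min a_gt0 b_gt0.
case: (Kinverse_cases (alpha_pq a b p q) y) => [[t_ge0 alpha_t]|->]; last first.
  by rewrite divr_ge0 // ltW.
set t := Kinverse _ y in t_ge0 alpha_t *.
rewrite ler_pdivlMr // mulrC -alpha_t (le_trans _ (alpha_pq_ge _ _ _ a_gt0 b_gt0)) //.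
rewrite ler_pM2l // -{1}(powRr1 t_ge0); apply: powR_le_add => //.
by rewrite p_le1.
Qed.

Section power_sum.
Variables (R : realType) (n : nat) (c e : 'I_n -> R).
Hypotheses (n_gt0 : (0 < n)%N) (c_gt0 : forall j, 0 < c j) (e_gt0 : forall j, 0 < e j).

Let j0 : 'I_n := Ordinal n_gt0.
Local Notation sigma := (sigma_sum c e).

Lemma sigma_sum0 : sigma 0 = 0.
Proof. by apply: big1 => j _; rewrite powR0 ?mulr0 // gt_eqF. Qed.

Lemma sigma_sum_ge_term s j : c j * s `^ e j <= sigma s.
Proof.
rewrite /sigma_sum (bigD1 j) //= lerDl; apply: sumr_ge0 => i _.
by rewrite mulr_ge0 ?powR_ge0 // ltW.
Qed.

Lemma sigma_sum_lt x y : 0 <= x -> x < y -> sigma x < sigma y.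
Proof.
move=> x_ge0 xy; apply: ltr_sum => [|j _]; first by apply/hasP; exists j0.
by rewrite ltr_pM2l // gt0_ltr_powR // nnegrE // (le_trans x_ge0 (ltW xy)).
Qed.

Lemma sigma_sum_gt0 s : 0 < s -> 0 < sigma s.
Proof. by move=> s_gt0; rewrite -sigma_sum0 sigma_sum_lt. Qed.

Lemma sigma_sum_unbounded M : exists s, 0 <= s /\ M < sigma s.
Proof.
set K := (`|M| + 1) / c j0.
have K_gt0 : 0 < K by rewrite divr_gt0 // ltr_pwDr // normr_ge0.
exists (K `^ (e j0)^-1); split; first exact: powR_ge0.
apply: lt_le_trans (sigma_sum_ge_term _ j0).
rewrite -powRrM mulVf ?gt_eqF // powRr1 ?ltW // /K mulrC divfK ?gt_eqF //.
by rewrite (le_lt_trans (ler_norm M)) // ltrDl.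
Qed.

Lemma is_derive_sigma_sum (x : R) : 0 < x ->
  is_derive x 1 sigma (\sum_(j < n) c j * (e j * x `^ (e j - 1))).
Proof.
move=> x_gt0; rewrite [sigma](_ : _ = \sum_(j < n) (fun s => c j * s `^ e j)).
  apply: is_derive_sum => j.
  rewrite [X in is_derive _ _ X](_ : _ = c j \*: (@powR R ^~ (e j))) //.
  exact: is_deriveZ (is_derive1_powR (e j) x_gt0).
by apply/funext => s; rewrite fct_sumE.
Qed.

Lemma sigma_sum_continuous : {within [set x | 0 <= x], continuous sigma}.
Proof.
have -> : [set x : R | 0 <= x] = `[0, +oo[%classic.
  by apply/seteqP; split=> x /=; rewrite in_itv /= andbT.
apply/continuous_within_itvcyP; split.
  move=> x; rewrite in_itv /= andbT => x_gt0.
  apply/differentiable_continuous; rewrite -derivable1_diffP.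
  have dsigma := is_derive_sigma_sum x_gt0; exact: ex_derive.
have : sigma x @[x --> 0^'+] --> \sum_(j < n) c j * 0.
  apply: cvg_big => [|j _]; first exact: add_continuous.
  exact: cvgMl_tmp (powR_cvg0 (e_gt0 j)).
by rewrite big1 ?sigma_sum0 // => j _; rewrite mulr0.
Qed.

Lemma sigma_sum_KP : KP sigma.
Proof.
split; [split|split].
- exact: sigma_sum0.
- exact: sigma_sum_continuous.
- by move=> x y; exact: sigma_sum_lt.
- exact: sigma_sum_unbounded.
- by exists n, c, e; split => // j; rewrite gt_eqF.
move=> x x_gt0; have dsigma := is_derive_sigma_sum x_gt0.
split; first exact: ex_derive.
rewrite derive1E derive_val (bigD1 j0) //= ltr_pwDl ?mulr_gt0 ?powR_gt0 //.
by apply: sumr_ge0 => j _; rewrite !mulr_ge0 ?powR_ge0 // ltW.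
Qed.

End power_sum.

Lemma sigma_sumZ (R : realType) n (k : R) (c e : 'I_n -> R) s :
  sigma_sum (fun j => k * c j) e s = k * sigma_sum c e s.
Proof. by rewrite /sigma_sum mulr_sumr; apply: eq_bigr => j _; rewrite mulrA. Qed.

Lemma ltr_sigma_sum (R : realType) n (c d e : 'I_n -> R) s :
  (0 < n)%N -> (forall j, c j < d j) -> 0 < s -> sigma_sum c e s < sigma_sum d e s.
Proof.
move=> n_gt0 cd s_gt0; apply: ltr_sum => [|j _]; last by rewrite ltr_pM2r ?powR_gt0.
by apply/hasP; exists (Ordinal n_gt0).
Qed.

Lemma sigma_sum_lt_of_terms (R : realType) n (c e : 'I_n -> R) s y :
  (0 < n)%N -> (forall j, n%:R * (c j * s `^ e j) < y) -> sigma_sum c e s < y.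
Proof.
move=> n_gt0 terms_lt; rewrite -(@ltr_pM2l _ n%:R) ?ltr0n // /sigma_sum mulr_sumr.
apply: (@lt_le_trans _ _ (\sum_(j < n) y)); last by rewrite sumr_const card_ord mulr_natl.
by apply: ltr_sum => [|j _]; first by apply/hasP; exists (Ordinal n_gt0).
Qed.

Lemma Kinverse_alpha_pq_lt_sigma_sum (R : realType) (a b p q : R) n (c e : 'I_n -> R) s :
  0 < a -> 0 < b -> 0 < p <= 1 -> 1 <= q -> (0 < n)%N -> (forall j, 0 < c j) ->
  (forall j, 0 < e j) -> 0 < s ->
  Kinverse (alpha_pq a b p q) (sigma_sum c e s) <
    sigma_sum (fun j => 2 / minr a b * c j) e s.
Proof.
move=> a_gt0 b_gt0 p_range q_ge1 n_gt0 c_gt0 e_gt0 s_gt0.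
have sigma_gt0 := sigma_sum_gt0 n_gt0 c_gt0 e_gt0 s_gt0.
rewrite sigma_sumZ.
rewrite (le_lt_trans (Kinverse_alpha_pq_le a_gt0 b_gt0 p_range q_ge1 (ltW sigma_gt0))) //.
by rewrite mulrAC ltr_pM2r ?invr_gt0 ?lt_min ?a_gt0 // ltr_pMl // ltr1n.
Qed.

Lemma sigma_sum_le_scaled (R : realType) n (c eta : 'I_n -> R) (p q e B M s t : R) :
  (forall k, 0 <= c k) -> (forall k, 0 <= eta k) -> 0 < p ->
  (forall k, p <= e * eta k <= q) -> 0 <= B -> 0 <= M -> 0 <= t -> 0 <= s ->
  s <= B * M * t `^ e ->
  sigma_sum c eta s <=
    fmax c * fmax (fun k => M `^ eta k) * (t `^ p + t `^ q) * sigma_sum (fun=> 1) eta B.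
Proof.
move=> c_ge0 eta_ge0 p_gt0 e_eta B_ge0 M_ge0 t_ge0 s_ge0 s_le.
set F := fmax (fun k => M `^ eta k); set tpq := _ + _.
rewrite /sigma_sum mulr_sumr; apply: ler_sum => k _.
rewrite [X in _ <= X](_ : _ = fmax c * (B `^ eta k * F * tpq)); last by ring.
apply: ler_pM; rewrite ?powR_ge0 ?le_fmax //.
apply: le_trans (ge0_ler_powR (eta_ge0 k) _ _ s_le) _; rewrite ?nnegrE //.
  by rewrite !mulr_ge0 ?powR_ge0.
rewrite !powRM ?mulr_ge0 ?powR_ge0 // -powRrM.
apply: ler_pM; rewrite ?mulr_ge0 ?powR_ge0 ?powR_le_add //.
by rewrite ler_wpM2l ?powR_ge0 // (le_fmax (fun k => M `^ eta k)).
Qed.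

Lemma alpha_pq_preimage_lt (R : realType) (a b p q : R) n1 n2
    (eta1 : 'I_n1 -> R) (eta2 c : 'I_n2 -> R) (B M s t : R) :
  0 < a -> 0 < b -> 0 < p -> (forall j, 0 < eta1 j) -> (forall k, 0 <= eta2 k) ->
  (forall j k, p <= eta1 j * eta2 k <= q) -> (forall k, 0 <= c k) ->
  0 <= B -> 0 <= M -> 0 < s -> 0 <= t ->
  fmax c * fmax (fun k => M `^ eta2 k) * sigma_sum (fun=> 1) eta2 B < minr a b ->
  alpha_pq a b p q t = sigma_sum c eta2 s ->
  forall j, B * M * t `^ eta1 j < s.
Proof.
move=> a_gt0 b_gt0 p_gt0 eta1_gt0 eta2_ge0 eta_range c_ge0 B_ge0 M_ge0 s_gt0 t_ge0
  small alpha_t j.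
rewrite ltNge; apply/negP => s_le.
have t_gt0 : 0 < t.
  rewrite lt_neqAle t_ge0 andbT eq_sym; apply/negP => /eqP t0.
  by move: s_le; rewrite t0 powR0 ?gt_eqF // mulr0 leNgt s_gt0.
set tpq := t `^ p + t `^ q.
have tpq_gt0 : 0 < tpq by rewrite addr_gt0 ?powR_gt0.
have lower := alpha_pq_ge p q t a_gt0 b_gt0; rewrite alpha_t -/tpq in lower.
have upper := sigma_sum_le_scaled c_ge0 eta2_ge0 p_gt0 (eta_range j) B_ge0 M_ge0
  t_ge0 (ltW s_gt0) s_le.
rewrite -/tpq mulrAC in upper.
have := small; rewrite -(ltr_pM2r tpq_gt0).
lra.
Qed.

Lemma Kinverse_alpha_pq_lt (R : realType) (a b p q : R) n1 n2
    (eta1 : 'I_n1 -> R) (eta2 c : 'I_n2 -> R) (B M s : R) :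
  0 < a -> 0 < b -> 0 < p -> (0 < n1)%N -> (forall j, 0 < eta1 j) ->
  (forall k, 0 <= eta2 k) -> (forall j k, p <= eta1 j * eta2 k <= q) ->
  (forall k, 0 <= c k) -> 0 < B -> 0 < M -> 0 < s ->
  fmax c * fmax (fun k => M `^ eta2 k) * sigma_sum (fun=> 1) eta2 B < minr a b ->
  Kinverse (alpha_pq a b p q) (sigma_sum c eta2 s) <
    Kinverse (sigma_sum (fun=> B * M / n1%:R) eta1) s.
Proof.
move=> a_gt0 b_gt0 p_gt0 n1_gt0 eta1_gt0 eta2_ge0 eta_range c_ge0 B_gt0 M_gt0 s_gt0
  small.
have [beta_Kinf _] : KP (sigma_sum (fun=> B * M / n1%:R) eta1).
  by apply: sigma_sum_KP => // j; rewrite !divr_gt0 ?mulr_gt0 ?ltr0n.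
have [[t_ge0 alpha_t]|->] := Kinverse_cases (alpha_pq a b p q) (sigma_sum c eta2 s).
  apply: (Kinverse_gt beta_Kinf t_ge0); apply: sigma_sum_lt_of_terms => // j.
  rewrite mulrA [_ * (_ / _)]mulrC divfK ?pnatr_eq0 -?lt0n //.
  exact: alpha_pq_preimage_lt a_gt0 b_gt0 p_gt0 eta1_gt0 eta2_ge0 eta_range c_ge0
    (ltW B_gt0) (ltW M_gt0) s_gt0 t_ge0 small alpha_t j.
by apply: Kinverse_gt => //; rewrite sigma_sum0.
Qed.

Theorem lemma10 (R : realType) (a1 a2 b1 b2 p1 p2 q1 q2 : R) (n1 n2 : nat)
    (eta1 : 'I_n1 -> R) (eta2 : 'I_n2 -> R) :
  0 < a1 -> 0 < a2 -> 0 < b1 -> 0 < b2 ->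
  0 < p1 < 1 -> 0 < p2 < 1 -> 1 < q1 -> 1 < q2 ->
  (1 <= n1)%N -> (1 <= n2)%N ->
  (forall j, 0 < eta1 j) -> (forall j, 0 < eta2 j) ->
  (forall i j, p2 <= eta1 i * eta2 j <= q2) ->
  fmax eta2 / fmin eta2 <= q2 / p2 ->
  exists C : R, 0 < C /\
    forall (c1 : 'I_n1 -> R) (c2 : 'I_n2 -> R),
      (forall j, 0 < c1 j) -> (forall j, 0 < c2 j) ->
      let gamma1 := fun s => Kinverse (alpha_pq a1 b1 p1 q1) (sigma_sum c1 eta1 s) in
      let gamma2 := fun s => Kinverse (alpha_pq a2 b2 p2 q2) (sigma_sum c2 eta2 s) in
      fmax c2 * fmax (fun k => fmax c1 `^ eta2 k) < C ->
      exists gh1 gh2 : R -> R, KP gh1 /\ KPinv gh2 /\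
        forall s, 0 < s ->
          [/\ gh1 s > gamma1 s, gh2 s > gamma2 s & gh1 (gh2 s) < s].
Proof.
move=> a1_gt0 a2_gt0 b1_gt0 b2_gt0 /andP[p1_gt0 p1_lt1] /andP[p2_gt0 _] q1_gt1 _
  n1_gt0 n2_gt0 eta1_gt0 eta2_gt0 eta_range _.
have m1_gt0 : 0 < minr a1 b1 by rewrite lt_min a1_gt0 b1_gt0.
set k := 2 / minr a1 b1; set B := k * 2 * n1%:R; set P := sigma_sum (fun=> 1) eta2 B.
have k_gt0 : 0 < k by rewrite divr_gt0.
have B_gt0 : 0 < B by rewrite !mulr_gt0 ?invr_gt0 ?ltr0n.
have P_gt0 : 0 < P by rewrite sigma_sum_gt0.
exists (minr a2 b2 / P); split=> [|c1 c2 c1_gt0 c2_gt0 gamma1 gamma2 small].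
  by rewrite divr_gt0 // lt_min a2_gt0 b2_gt0.
set M1 := fmax c1; have M1_gt0 : 0 < M1 := fmax_gt0 n1_gt0 c1_gt0.
have {}small : fmax c2 * fmax (fun k => M1 `^ eta2 k) * P < minr a2 b2.
  by rewrite -ltr_pdivlMr.
set beta := sigma_sum (fun=> B * M1 / n1%:R) eta1.
have lt_beta_coef j : k * c1 j < B * M1 / n1%:R.
  rewrite /B (mulrAC _ n1%:R) mulfK ?pnatr_eq0 -?lt0n // -[k * 2 * M1]mulrA ltr_pM2l //.
  by rewrite (le_lt_trans (le_fmax c1 j)) // ltr_pMl // ltr1n.
have beta_coef_gt0 : 0 < B * M1 / n1%:R by rewrite divr_gt0 ?ltr0n // mulr_gt0.
have beta_KP : KP beta := sigma_sum_KP n1_gt0 (fun=> beta_coef_gt0) eta1_gt0.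
exists (sigma_sum (fun j => k * c1 j) eta1), (Kinverse beta).
split; first exact: sigma_sum_KP n1_gt0 (fun j => mulr_gt0 k_gt0 (c1_gt0 j)) eta1_gt0.
split=> [|s s_gt0]; first exact: KPinv_Kinverse.
have beta_Kinf := beta_KP.1.
split.
- by apply: Kinverse_alpha_pq_lt_sigma_sum; rewrite ?p1_gt0 ?ltW.
- exact: Kinverse_alpha_pq_lt a2_gt0 b2_gt0 p2_gt0 n1_gt0 eta1_gt0
    (fun k => ltW (eta2_gt0 k)) eta_range (fun k => ltW (c2_gt0 k)) B_gt0 M1_gt0
    s_gt0 small.
- rewrite -[ltRHS](f_Kinverse beta_Kinf (ltW s_gt0)) ltr_sigma_sum //.
  by apply: Kinverse_gt => //; rewrite /beta sigma_sum0.
Qed.
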